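(* Let $(L,\rho,\tau)$ be a probabilistic metric space whose triangle function $\tau$ is sup-continuous and satisfies condition (W). If $(A_n)$ is a sequence in $P_f(L)$ converging to $A\in P_f(L)$ with respect to the probabilistic Pompeiu–Hausdorff metric $H$, then $$A=\bigcap_{n\ge1}\operatorname{cl}\Big(\bigcup_{m\ge n}A_m\Big)=\bigcap_{\epsilon>0}\bigcup_{n\ge1}\bigcap_{m\ge n}(A_m)_\epsilon .$$
   Context: $\Delta^+$ is the set of functions $F:[-\infty,\infty]\to[0,1]$ that are nondecreasing, left-continuous on $\mathbb R$, with $F(-\infty)=0$, $F(\infty)=1$, $F(0)=0$; ordered pointwise; $\epsilon_0(x)=0$ for $x\le0$, $=1$ for $x>0$. Infimum of $\{F_i\}$ in $\Delta^+$: $G(x)=\sup_{x'<x}\inf_iF_i(x')$; supremum pointwise. A triangle function is $\tau:\Delta^+\times\Delta^+\to\Delta^+$ commutative, associative, nondecreasing in each argument, with $\tau(F,\epsilon_0)=F$, continuous for weak convergence. A probabilistic metric space $(L,\rho,\tau)$: set $L$, continuous triangle function $\tau$, $\rho(p,q)=F_{pq}\in\Delta^+$ with $F_{pp}=\epsilon_0$, $F_{pq}=\epsilon_0\Rightarrow p=q$, $F_{pq}=F_{qp}$, $F_{pr}\ge\tau(F_{pq},F_{qr})$. Strong topology: neighborhood base $U_t(p)=\{q:F_{pq}(t)>1-t\}$, $t>0$; $\operatorname{cl}$ is closure in it. For $A\subset L$, $\epsilon>0$: $A_\epsilon=\bigcup_{p\in A}U_\epsilon(p)$. $\tau$ is sup-continuous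 if $\tau(\sup_iF_i,G)=\sup_i\tau(F_i,G)$ for every family $\{F_i\}\subset\Delta^+$, $G\in\Delta^+$. Condition (W): for all $x>0$, $F,G\in\Delta^+$, $\alpha,\beta\in\mathbb R$, $F(x)>\alpha$ and $G(x)>\beta$ imply $\tau(F,G)(x)>\alpha+\beta-1$. For nonempty $A,B\subset L$: $F_{pB}(x)=\sup_{q\in B}F_{pq}(x)$, $\Gamma^*_{AB}(x)=\inf_{p\in A}F_{pB}(x)$, $F^*_{AB}(x)=\sup_{x'<x}\Gamma^*_{AB}(x')$, $H(A,B)=F_{AB}=\min\{F^*_{AB},F^*_{BA}\}$. $P_f(L)$ is the family of nonempty closed subsets; $A_n\to A$ with respect to $H$ iff for every $t>0$, $F_{A_nA}(t)>1-t$ for all large $n$. *)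

From Stdlib Require Import Reals.
From Coquelicot Require Import Coquelicot.
Open Scope R_scope.

(* An element of Delta^+ is represented by its restriction to R
   (its values at -oo and +oo are forced to be 0 and 1). *)
Definition nondecr (F : R -> R) : Prop := forall x y, x <= y -> F x <= F y.
Definition left_cont (F : R -> R) : Prop :=
  forall x eps, 0 < eps -> exists delta, 0 < delta /\
    forall y, x - delta < y <= x -> Rabs (F y - F x) < eps.
Definition is_dplus (F : R -> R) : Prop :=
  (forall x, 0 <= F x <= 1) /\ nondecr F /\ left_cont F /\ F 0 = 0.

Definition eps0 (x : R) : R := if Rle_dec x 0 then 0 else 1.

Definition dle (F G : R -> R) : Prop := forall x, F x <= G x.

Definition weak_cv (Fn : nat -> R -> R) (F : R -> R) : Prop :=
  forall x, continuity_pt F x -> Un_cv (fun n => Fn n x) (F x).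

Definition triangle_function (tau : (R -> R) -> (R -> R) -> (R -> R)) : Prop :=
  (forall F G, is_dplus F -> is_dplus G -> is_dplus (tau F G)) /\
  (forall F G, is_dplus F -> is_dplus G -> forall x, tau F G x = tau G F x) /\
  (forall F G K, is_dplus F -> is_dplus G -> is_dplus K ->
     forall x, tau F (tau G K) x = tau (tau F G) K x) /\
  (forall F F' G, is_dplus F -> is_dplus F' -> is_dplus G ->
     dle F F' -> dle (tau F G) (tau F' G)) /\
  (forall F G G', is_dplus F -> is_dplus G -> is_dplus G' ->
     dle G G' -> dle (tau F G) (tau F G')) /\
  (forall F, is_dplus F -> forall x, tau F eps0 x = F x).

Definition tau_continuous (tau : (R -> R) -> (R -> R) -> (R -> R)) : Prop :=
  forall (Fn Gn : nat -> R -> R) F G,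
    (forall n, is_dplus (Fn n)) -> (forall n, is_dplus (Gn n)) ->
    is_dplus F -> is_dplus G ->
    weak_cv Fn F -> weak_cv Gn G ->
    weak_cv (fun n => tau (Fn n) (Gn n)) (tau F G).

(* sup-continuity: tau(sup_i F_i, G) = sup_i tau(F_i, G); suprema in Delta^+
   are pointwise. *)
Definition sup_continuous (tau : (R -> R) -> (R -> R) -> (R -> R)) : Prop :=
  forall (I : Type) (Fs : I -> R -> R) (S G : R -> R),
    (forall i, is_dplus (Fs i)) -> is_dplus G -> is_dplus S ->
    (forall x, is_lub (fun y => exists i, y = Fs i x) (S x)) ->
    forall x, is_lub (fun y => exists i, y = tau (Fs i) G x) (tau S G x).

Definition condW (tau : (R -> R) -> (R -> R) -> (R -> R)) : Prop :=
  forall x F G alpha beta, 0 < x -> is_dplus F -> is_dplus G ->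
    F x > alpha -> G x > beta -> tau F G x > alpha + beta - 1.

Definition PM_space (L : Type) (rho : L -> L -> R -> R)
  (tau : (R -> R) -> (R -> R) -> (R -> R)) : Prop :=
  triangle_function tau /\ tau_continuous tau /\
  (forall p q, is_dplus (rho p q)) /\
  (forall p x, rho p p x = eps0 x) /\
  (forall p q, (forall x, rho p q x = eps0 x) -> p = q) /\
  (forall p q x, rho p q x = rho q p x) /\
  (forall p q r, dle (tau (rho p q) (rho q r)) (rho p r)).

Section Sets.
Variable (L : Type) (rho : L -> L -> R -> R).

Definition U_nb (t : R) (p : L) : L -> Prop := fun q => rho p q t > 1 - t.

Definition cl (A : L -> Prop) : L -> Prop :=
  fun p => forall t, 0 < t -> exists q, A q /\ U_nb t p q.

Definition closed (A : L -> Prop) : Prop := forall p, cl A p -> A p.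
Definition nonempty (A : L -> Prop) : Prop := exists p, A p.
Definition Pf (A : L -> Prop) : Prop := nonempty A /\ closed A.

Definition enlarge (A : L -> Prop) (e : R) : L -> Prop :=
  fun q => exists p, A p /\ U_nb e p q.

Definition F_pB (p : L) (B : L -> Prop) (x : R) : R :=
  real (Lub_Rbar (fun y => exists q, B q /\ y = rho p q x)).
Definition Gamma_star (A B : L -> Prop) (x : R) : R :=
  real (Glb_Rbar (fun y => exists p, A p /\ y = F_pB p B x)).
Definition F_star (A B : L -> Prop) (x : R) : R :=
  real (Lub_Rbar (fun y => exists x', x' < x /\ y = Gamma_star A B x')).
Definition H (A B : L -> Prop) (x : R) : R :=
  Rmin (F_star A B x) (F_star B A x).

Definition H_converges (An : nat -> L -> Prop) (A : L -> Prop) : Prop :=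
  forall t, 0 < t -> exists N, forall n, (N <= n)%nat -> H (An n) A t > 1 - t.

End Sets.

(** By condition (W), [U_s(p) ∋ q] and [U_s(q) ∋ r] give [U_{2s}(p) ∋ r], so
    H-convergence makes every point of [A] eventually [t]-close to [A_m], and
    every point frequently [t/2]-close to the [A_m] [t]-close to [A]; since [A]
    is closed, both characterisations of [A] follow. *)
From Pilot Require Import Defs.
From Stdlib Require Import Reals Lra Classical.
From Coquelicot Require Import Coquelicot.
Open Scope R_scope.

Lemma Lub_Rbar_gt_witness (S : R -> Prop) (c : R) :
  (exists y, S y) -> c < real (Lub_Rbar S) -> exists y, S y /\ c < y.
Proof.
  destruct (Lub_Rbar_correct S) as [Hub Hleast]; intros [y0 Hy0] Hc.
  apply NNPP; intros Hno.
  assert (Hc_ub : is_ub_Rbar S c).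
  { intros y Hy; simpl; apply Rnot_lt_le; intros Hlt; apply Hno; eauto. }
  specialize (Hleast _ Hc_ub); specialize (Hub _ Hy0).
  destruct (Lub_Rbar S); simpl in *; try contradiction; lra.
Qed.

Lemma Glb_Rbar_gt_lb (S : R -> Prop) (c : R) :
  (forall y, S y -> 0 <= y) -> c < real (Glb_Rbar S) -> forall y, S y -> c < y.
Proof.
  destruct (Glb_Rbar_correct S) as [Hlb Hgreatest]; intros Hnonneg Hc y Hy.
  assert (H0_lb : is_lb_Rbar S 0) by (intros z Hz; simpl; auto).
  specialize (Hgreatest _ H0_lb); specialize (Hlb _ Hy).
  destruct (Glb_Rbar S); simpl in *; try contradiction; lra.
Qed.

(* [real] sends [p_infty] and [m_infty] to [0], hence no nonemptiness assumption. *)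
Lemma Lub_Rbar_ge0 (S : R -> Prop) :
  (forall y, S y -> 0 <= y) -> 0 <= real (Lub_Rbar S).
Proof.
  destruct (Lub_Rbar_correct S) as [Hub Hleast]; intros Hnonneg.
  destruct (Lub_Rbar S) as [l| |] eqn:El; simpl; try lra.
  destruct (classic (exists y, S y)) as [[y Hy]|Hempty].
  - specialize (Hub y Hy); specialize (Hnonneg y Hy); simpl in Hub; lra.
  - assert (Hlow : is_ub_Rbar S (l - 1)) by (intros y Hy; exfalso; eauto).
    specialize (Hleast _ Hlow); simpl in Hleast; lra.
Qed.

Section PM_space_facts.

Variables (L : Type) (rho : L -> L -> R -> R).
Hypothesis rho_dplus : forall p q, is_dplus (rho p q).

Lemma F_star_gt_witness (A B : L -> Prop) (t c : R) :
  nonempty L A -> nonempty L B -> c < F_star L rho A B t ->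
  forall p, A p -> exists q, B q /\ c < rho p q t.
Proof.
  intros [p0 Hp0] [q0 Hq0] Hc p Hp.
  assert (Hbelow : t - 1 < t) by lra.
  destruct (Lub_Rbar_gt_witness _ _ (ex_intro _ _ (ex_intro _ _ (conj Hbelow eq_refl))) Hc)
    as [y [[x' [Hx' ->]] Hy]].
  assert (HFpB : c < F_pB L rho p B x').
  { refine (Glb_Rbar_gt_lb _ _ _ Hy _ _); [|now exists p].
    intros z [p' [_ ->]]; apply Lub_Rbar_ge0.
    intros w [q' [_ ->]]; apply (rho_dplus p' q'). }
  destruct (Lub_Rbar_gt_witness _ _ (ex_intro _ _ (ex_intro _ q0 (conj Hq0 eq_refl))) HFpB)
    as [w [[q [Hq ->]] Hw]].
  exists q; split; [exact Hq|].
  destruct (rho_dplus p q) as [_ [Hmono _]]; specialize (Hmono x' t ltac:(lra)); lra.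
Qed.

Lemma H_gt_near_l (A B : L -> Prop) (t : R) :
  nonempty L A -> nonempty L B -> H L rho A B t > 1 - t ->
  forall p, A p -> exists q, B q /\ U_nb L rho t p q.
Proof.
  intros HA HB Ht; apply F_star_gt_witness; auto.
  unfold H in Ht; pose proof (Rmin_l (F_star L rho A B t) (F_star L rho B A t)); lra.
Qed.

Lemma H_gt_near_r (A B : L -> Prop) (t : R) :
  nonempty L A -> nonempty L B -> H L rho A B t > 1 - t ->
  forall p, B p -> exists q, A q /\ U_nb L rho t p q.
Proof.
  intros HA HB Ht; apply F_star_gt_witness; auto.
  unfold H in Ht; pose proof (Rmin_r (F_star L rho A B t) (F_star L rho B A t)); lra.
Qed.

Hypothesis rho_sym : forall p q x, rho p q x = rho q p x.

Lemma U_nb_sym (t : R) (p q : L) : U_nb L rho t p q -> U_nb L rho t q p.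
Proof. unfold U_nb; now rewrite rho_sym. Qed.

Variable tau : (R -> R) -> (R -> R) -> (R -> R).
Hypothesis rho_triangle : forall p q r, dle (tau (rho p q) (rho q r)) (rho p r).
Hypothesis tau_W : condW tau.

Lemma U_nb_trans (s : R) (p q r : L) : 0 < s ->
  U_nb L rho s p q -> U_nb L rho s q r -> U_nb L rho (2 * s) p r.
Proof.
  unfold U_nb; intros Hs Hpq Hqr.
  pose proof (tau_W s _ _ _ _ Hs (rho_dplus p q) (rho_dplus q r) Hpq Hqr).
  pose proof (rho_triangle p q r s).
  destruct (rho_dplus p r) as [_ [Hmono _]]; specialize (Hmono s (2 * s) ltac:(lra)); lra.
Qed.

Variables (An : nat -> L -> Prop) (A : L -> Prop).
Hypotheses (An_nonempty : forall n, nonempty L (An n)) (A_nonempty : nonempty L A).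
Hypothesis An_to_A : H_converges L rho An A.

Lemma H_limit_eventually_near (p : L) : A p ->
  forall t, 0 < t -> exists N, forall m, (N <= m)%nat ->
    exists q, An m q /\ U_nb L rho t p q.
Proof.
  intros Hp t Ht; destruct (An_to_A t Ht) as [N HN]; exists N; intros m Hm.
  exact (H_gt_near_r _ _ _ (An_nonempty m) A_nonempty (HN m Hm) p Hp).
Qed.

Lemma H_limit_of_frequently_near (p : L) : Defs.closed L rho A ->
  (forall t, 0 < t -> forall N, exists m q, (N <= m)%nat /\ An m q /\ U_nb L rho t p q) ->
  A p.
Proof.
  intros HAclosed Hfreq; apply HAclosed; intros t Ht.
  destruct (An_to_A (t / 2) ltac:(lra)) as [N HN].
  destruct (Hfreq (t / 2) ltac:(lra) N) as [m [q [Hm [Hq Hpq]]]].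
  destruct (H_gt_near_l _ _ _ (An_nonempty m) A_nonempty (HN m Hm) q Hq) as [r [Hr Hqr]].
  exists r; split; [exact Hr|].
  replace t with (2 * (t / 2)) by field; apply (U_nb_trans _ p q r); auto; lra.
Qed.

End PM_space_facts.

Theorem proposition4p7 (L : Type) (rho : L -> L -> R -> R)
  (tau : (R -> R) -> (R -> R) -> (R -> R))
  (An : nat -> L -> Prop) (A : L -> Prop) :
  PM_space L rho tau -> sup_continuous tau -> condW tau ->
  (forall n, Pf L rho (An n)) -> Pf L rho A ->
  H_converges L rho An A ->
  (forall p, A p <->
     (forall n, cl L rho (fun q => exists m, (n <= m)%nat /\ An m q) p)) /\
  (forall p, A p <->
     (forall e, 0 < e -> exists n, forall m, (n <= m)%nat ->
        enlarge L rho (An m) e p)).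
Proof.
  intros [_ [_ [Hdp [_ [_ [Hsym Htri]]]]]] _ HW HAn [HA HAclosed] Hconv.
  assert (HAn_ne : forall n, nonempty L (An n)) by (intros n; apply HAn).
  pose proof (H_limit_eventually_near L rho Hdp An A HAn_ne HA Hconv) as Heventually.
  pose proof (H_limit_of_frequently_near L rho Hdp tau Htri HW An A HAn_ne HA Hconv)
    as Hfrequently.
  split; intros p; split.
  - intros Hp n t Ht; destruct (Heventually p Hp t Ht) as [N HN].
    destruct (HN (Nat.max n N) (Nat.le_max_r _ _)) as [q [Hq Hpq]].
    exists q; split; [exists (Nat.max n N); split; [apply Nat.le_max_l | exact Hq] | exact Hpq].
  - intros Hcl; apply Hfrequently; [exact HAclosed|]; intros t Ht N.
    destruct (Hcl N t Ht) as [q [[m [Hm Hq]] Hpq]]; now exists m, q.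
  - intros Hp e He; destruct (Heventually p Hp e He) as [N HN]; exists N; intros m Hm.
    destruct (HN m Hm) as [q [Hq Hpq]]; exists q; split; [exact Hq|].
    now apply (U_nb_sym L rho Hsym).
  - intros Henl; apply Hfrequently; [exact HAclosed|]; intros t Ht N.
    destruct (Henl t Ht) as [n Hn].
    destruct (Hn (Nat.max n N) (Nat.le_max_l _ _)) as [q [Hq Hqp]].
    exists (Nat.max n N), q; split; [apply Nat.le_max_r|].
    split; [exact Hq | now apply (U_nb_sym L rho Hsym)].
Qed.
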